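(* Let $T$ be a tree, $f_1,f_2$ proper 3-colorings of $T$, and $h\in D(f_1,f_2)$. Then there is a walk from $f_1$ to $f_2$ in $\mathcal{C}_3(T)$ of length $\|h\|_1$ in which each vertex $w$ is toggled exactly $|h(w)|$ times, every such toggle changing the color of $w$ by $\operatorname{sign}(h(w))\in\{+1,-1\}$ (in $\mathbb{Z}/3\mathbb{Z}$). In particular the walk contains no two steps that toggle the same vertex in opposite directions.
   Context: Let $T$ be a finite tree with vertex set $V$ and edge set $E$. A proper 3-coloring of $T$ is a map $f\colon V\to\mathbb{Z}/3\mathbb{Z}$ with $f(u)\neq f(v)$ for every edge $uv\in E$. The 3-coloring graph $\mathcal{C}_3(T)$ has the proper 3-colorings as vertices, two colorings adjacent iff they differ at exactly one vertex; a step of a walk changing the color of $w$ by $\pm1$ is a $(\pm1)$-toggle at $w$. A labeling of $T$ is a map $h\colon V\to\mathbb{Z}$ with $|h(u)-h(v)|\le 1$ for every edge $uv\in E$, and $\|h\|_1=\sum_{v\in V}|h(v)|$. Given proper 3-colorings $f,g$, $D(f,g)$ is the set of labelings $h$ with $h(v)\equiv g(v)-f(v)\pmod 3$ for all $v\in V$. *)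

From mathcomp Require Import all_boot all_order all_algebra.
Set Implicit Arguments. Unset Strict Implicit. Unset Printing Implicit Defensive.
Import Order.TTheory GRing.Theory Num.Theory.

Definition simple_graph (V : finType) (e : rel V) : Prop :=
  symmetric e /\ irreflexive e.

Definition acyclic (V : finType) (e : rel V) : Prop :=
  forall c : seq V, uniq c -> 3 <= size c -> ~~ cycle e c.

Definition connected (V : finType) (e : rel V) : Prop :=
  forall x y : V, connect e x y.

Definition is_tree (V : finType) (e : rel V) : Prop :=
  [/\ simple_graph e, connected e & acyclic e].

Definition coloring (V : finType) := {ffun V -> 'Z_3}.

Definition proper_coloring (V : finType) (e : rel V) (f : coloring V) : bool :=
  [forall u, forall v, e u v ==> (f u != f v)].

Definition C3adj (V : finType) (f g : coloring V) : bool :=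
  #|[set x | f x != g x]| == 1%N.

Definition labeling (V : finType) (e : rel V) (h : V -> int) : Prop :=
  forall u v, e u v -> (`|h u - h v| <= 1)%R.

Definition norm1 (V : finType) (h : V -> int) : nat := \sum_(v : V) absz (h v).

Definition D (V : finType) (e : rel V) (f g : coloring V) (h : V -> int) : Prop :=
  labeling e h /\ forall v, ((h v)%:~R : 'Z_3)%R = (g v - f v)%R.

(* Induction on the norm of h.  Let M be the maximum of |h|.  Some vertex w with
   |h w| = M can be toggled by sgz (h w) without breaking properness.  Otherwise
   every such vertex x has a neighbour y coloured f1 x + sgz (h x); then h y = h x,
   for h y = h x - sgz (h x) would force f2 x = f2 y.  Following these neighbours
   never backtracks (2 sgz (h x) != 0 in Z/3), so it closes a cycle of length at
   least 3 in the tree.  Toggling w and moving h w one step towards 0 keeps f1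
   proper and h in D, and lowers the norm of h by one. *)

From mathcomp Require Import all_boot all_order all_algebra zify ring.
Import Order.TTheory GRing.Theory Num.Theory.
Set Implicit Arguments.
Unset Strict Implicit.
Unset Printing Implicit Defensive.

Lemma sgz_cases (a : int) : a != 0%R -> (0 < a /\ sgz a = 1 \/ a < 0 /\ sgz a = -1)%R.
Proof.
case: (ltgtP a 0%R) => // [a_neg|a_pos] _; last by left; rewrite gtr0_sgz.
by right; rewrite ltr0_sgz.
Qed.

Lemma abszBsgz (a : int) : absz (a - sgz a)%R = (absz a).-1.
Proof.
have [->|/sgz_cases [[a_pos ->]|[a_neg ->]]] := eqVneq a 0%R; [by [] | lia | lia].
Qed.

Lemma sgzBsgz (a : int) : (a - sgz a != 0 -> sgz (a - sgz a) = sgz a)%R.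
Proof.
have [->|/sgz_cases [[a_pos ->]|[a_neg ->]]] := eqVneq a 0%R; first by [].
  by move=> nz; rewrite gtr0_sgz //; move/eqP: nz; lia.
by move=> nz; rewrite ltr0_sgz //; move/eqP: nz; lia.
Qed.

Lemma near_max_cases (a b : int) :
  (a != 0 -> (absz b <= absz a)%N -> `|a - b| <= 1 -> b = a \/ b = a - sgz a)%R.
Proof. by case/sgz_cases => -[a_sgn ->]; lia. Qed.

Lemma sgz_Z3_neq0 (a : int) : (a != 0 -> (sgz a)%:~R != 0 :> 'Z_3)%R.
Proof. by case/sgz_cases => -[_ ->]. Qed.

Lemma sgz_Z3_double_neq0 (a : int) :
  (a != 0 -> (sgz a)%:~R + (sgz a)%:~R != 0 :> 'Z_3)%R.
Proof. by case/sgz_cases => -[_ ->]. Qed.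

Section AcyclicSink.

Variables (V : finType) (e r : rel V) (S : {pred V}).
Hypotheses (acyclic_e : acyclic e) (sub_r_e : subrel r e)
  (asym_r : {in S &, forall x y, r x y -> ~~ r y x}).

Lemma acyclic_sink x0 : x0 \in S -> exists2 x, x \in S & {in S, forall y, ~~ r x y}.
Proof.
move=> Sx0; have [/exists_inP [x Sx /forall_inP]|no_sink] :=
  boolP [exists x in S, [forall y in S, ~~ r x y]]; first by exists x.
exfalso; pose f x := odflt x [pick y in S | r x y].
have f_succ x : x \in S -> (f x \in S) && r x (f x).
  move=> Sx; rewrite /f; case: pickP => [y /andP [] -> -> //|no_succ].
  move/exists_inPn: no_sink => /(_ x Sx) /forall_inPn [y Sy].
  by rewrite negbK => rxy; move: (no_succ y); rewrite Sy rxy.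
have f_iterS k x : x \in S -> iter k f x \in S.
  by move=> Sx; elim: k => //= k /f_succ /andP [].
have f_neq x : x \in S -> f x != x.
  move=> Sx; apply/eqP => fx; case/andP: (f_succ x Sx) => _.
  by rewrite fx => rxx; move: (asym_r Sx Sx rxx); rewrite rxx.
have ff_neq x : x \in S -> f (f x) != x.
  move=> Sx; case/andP: (f_succ x Sx) => Sfx rxfx; case/andP: (f_succ _ Sfx) => _.
  by apply: contraTneq => ->; apply: asym_r.
(* the orbit of [x0] under [f] eventually enters a cycle, through [z] *)
have [i lt_i Ei] := trajectP (looping_order f x0).
set z := iter i f x0.
have Sz : z \in S by apply: f_iterS.
have cycle_z : fcycle f (orbit f z).
  apply/(orbitPcycle 3 0); exists (order f x0 - i).-1.
  by rewrite prednK ?subn_gt0 // /z -iterD subnK ?Ei // ltnW.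
have S_orbit : all [in S] (orbit f z).
  by apply/allP => y /trajectP [k _ ->]; apply: f_iterS.
have e_cycle : cycle e (orbit f z).
  apply: (sub_in_cycle _ S_orbit cycle_z) => x y Sx _ /eqP <-.
  by case/andP: (f_succ x Sx) => _ /sub_r_e.
have z_uniq3 : uniq [:: z; f z; f (f z)].
  rewrite /= !inE negb_or eq_sym f_neq // eq_sym ff_neq // eq_sym f_neq //.
  by case/andP: (f_succ z Sz).
have orbit_size3 : 3 <= size (orbit f z).
  apply: uniq_leq_size z_uniq3 _ => y; rewrite !inE -!fconnect_orbit.
  case/or3P => /eqP ->; first exact: connect0.
    exact: (fconnect_iter f 1).
  exact: (fconnect_iter f 2).
by move: (acyclic_e (orbit_uniq f z) orbit_size3); rewrite e_cycle.
Qed.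

End AcyclicSink.

Section Colorings.

Variables (V : finType) (e : rel V).

Lemma proper_coloringP (f : coloring V) :
  reflect (forall u v, e u v -> f u != f v) (proper_coloring e f).
Proof.
apply: (iffP forallP) => [pf u v euv | pf u].
  by move/forallP: (pf u) => /(_ v); rewrite euv.
by apply/forallP => v; apply/implyP; apply: pf.
Qed.

Definition toggle (f : coloring V) (w : V) (c : 'Z_3) : coloring V :=
  [ffun x => if x == w then (f w + c)%R else f x].

Lemma toggle_proper (f : coloring V) w c :
  symmetric e -> proper_coloring e f -> (forall v, e w v -> f v != f w + c)%R ->
  proper_coloring e (toggle f w c).
Proof.
move=> sym_e /proper_coloringP pf free_w; apply/proper_coloringP => x y exy.
rewrite !ffunE; case: (eqVneq x w) => [xw|_]; case: (eqVneq y w) => [yw|_].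
- by move: (pf x y exy); rewrite xw yw eqxx.
- by rewrite eq_sym free_w // -xw.
- by apply: free_w; rewrite -yw sym_e.
- exact: pf.
Qed.

Lemma toggle_C3adj (f : coloring V) w c : (c != 0)%R -> C3adj f (toggle f w c).
Proof.
move=> c_neq0; rewrite /C3adj (_ : [set x | _] = [set w]) ?cards1 //.
apply/setP => x; rewrite !inE ffunE; case: (eqVneq x w) => [->|]; last by rewrite eqxx.
by rewrite -subr_eq0 opprD addrA subrr add0r oppr_eq0.
Qed.

Lemma toggle_sub (f : coloring V) w c x :
  (toggle f w c x - f x = if x == w then c else 0)%R.
Proof. by rewrite ffunE; case: eqP => [->|_]; rewrite ?subrr // addrC addKr. Qed.

Lemma D_edge_neq (f1 f2 : coloring V) (h : V -> int) x v :
  proper_coloring e f2 -> (forall v, (h v)%:~R = f2 v - f1 v)%R -> e x v ->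
  (f1 v != f1 x + (h x - h v)%:~R)%R.
Proof.
move=> /proper_coloringP pf2 Dh exv; apply: contra (pf2 x v exv) => /eqP f1v.
rewrite -subr_eq0 -(subrK (f1 x) (f2 x)) -(subrK (f1 v) (f2 v)) -!Dh f1v intrB.
by apply/eqP; ring.
Qed.

End Colorings.

Section Labelings.

Variables (V : finType) (e : rel V).

Lemma norm1_eq0 (h : V -> int) : (norm1 h == 0%N) = [forall v, h v == 0%R].
Proof.
by rewrite /norm1 sum_nat_eq0; apply: eq_forallb => v; rewrite absz_eq0.
Qed.

Definition shrink (h : V -> int) (w : V) : V -> int :=
  fun x => if x == w then (h w - sgz (h w))%R else h x.

Lemma norm1_shrink (h : V -> int) w :
  (h w != 0)%R -> norm1 h = (norm1 (shrink h w)).+1.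
Proof.
move=> hw_neq0; rewrite /norm1 (bigD1 w) //= [in RHS](bigD1 w) //= {1}/shrink eqxx.
rewrite abszBsgz -addSn prednK ?absz_gt0 //; congr (_ + _).
by apply: eq_bigr => x /negbTE xw; rewrite /shrink xw.
Qed.

Lemma shrink_labeling (h : V -> int) w :
  symmetric e -> labeling e h -> (h w != 0)%R -> (forall v, absz (h v) <= absz (h w)) ->
  labeling e (shrink h w).
Proof.
move=> sym_e lab hw_neq0 hw_max x y exy; rewrite /shrink.
have near_w v : e w v -> (`|h w - sgz (h w) - h v| <= 1)%R.
  move=> ewv; have [->|->] := near_max_cases hw_neq0 (hw_max v) (lab w v ewv).
    by case/sgz_cases: hw_neq0 => -[_ ->]; lia.
  by rewrite subrr.
case: (eqVneq x w) => [xw|_]; case: (eqVneq y w) => [yw|_].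
- by rewrite subrr.
- by apply: near_w; rewrite -xw.
- by rewrite distrC; apply: near_w; rewrite -yw sym_e.
- exact: lab.
Qed.

Lemma D_toggle_shrink (f1 f2 : coloring V) (h : V -> int) w :
  symmetric e -> D e f1 f2 h -> (h w != 0)%R -> (forall v, absz (h v) <= absz (h w)) ->
  D e (toggle f1 w (sgz (h w))%:~R%R) f2 (shrink h w).
Proof.
move=> sym_e [lab Dh] hw_neq0 hw_max; split; first exact: shrink_labeling.
move=> x; rewrite /shrink ffunE; case: eqP => [->|_]; last exact: Dh.
by rewrite intrB Dh; ring.
Qed.

End Labelings.

Lemma exists_free_max_vertex (V : finType) (e : rel V) (f1 f2 : coloring V)
    (h : V -> int) v0 :
  acyclic e -> proper_coloring e f2 -> D e f1 f2 h -> (h v0 != 0)%R ->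
  exists w, [/\ (h w != 0)%R, forall v, absz (h v) <= absz (h w)
              & forall v, e w v -> (f1 v != f1 w + (sgz (h w))%:~R)%R].
Proof.
move=> acyclic_e pf2 [lab Dh] hv0_neq0.
have [w0 _ w0_max] := arg_maxnP (fun v => absz (h v)) (isT : predT v0).
pose S := [pred v | absz (h v) == absz (h w0)].
pose r := [rel x y | e x y && (f1 y == f1 x + (sgz (h x))%:~R)%R].
have S_max x : x \in S -> forall v, absz (h v) <= absz (h x).
  by move=> /eqP -> v; apply: w0_max.
have S_neq0 x : x \in S -> (h x != 0)%R.
  move=> /eqP Sx; rewrite -absz_eq0 Sx -lt0n.
  by apply: leq_trans (w0_max v0 isT); rewrite absz_gt0.
(* a step of [r] leaving [S] would make [f2] improper *)
have r_stays x y : x \in S -> r x y -> h y = h x.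
  move=> Sx /andP [exy /eqP f1y].
  have [//|hy] := near_max_cases (S_neq0 x Sx) (S_max x Sx y) (lab x y exy).
  by move: (D_edge_neq pf2 Dh exy); rewrite hy opprB addrCA subrr addr0 f1y eqxx.
have r_asym : {in S &, forall x y, r x y -> ~~ r y x}.
  move=> x y Sx _ rxy; have hyx := r_stays x y Sx rxy.
  case/andP: rxy => _ /eqP f1y; apply/negP => /andP [_ /eqP].
  rewrite hyx f1y -addrA -{1}[f1 x]addr0 => /addrI /esym /eqP.
  by apply/negP; apply: sgz_Z3_double_neq0; apply: S_neq0.
have sub_r_e : subrel r e by move=> x y /andP [].
have [w Sw w_sink] := acyclic_sink acyclic_e sub_r_e r_asym (eqxx _ : w0 \in S).
exists w; split; [exact: S_neq0 | exact: S_max |] => v ewv.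
apply/negP => f1v; have rwv : r w v by rewrite /= ewv f1v.
have Sv : v \in S by rewrite inE (r_stays w v Sw rwv).
exact: negP (w_sink v Sv) rwv.
Qed.

Section ToggleWalks.

Variables (V : finType) (e : rel V).

Definition toggle_walk (f1 f2 : coloring V) (h : V -> int) : Prop :=
  exists p : seq (coloring V),
    [/\ all (proper_coloring e) p,
        path (@C3adj V) f1 p,
        last f1 p = f2,
        size p = norm1 h
      & forall w : V,
          count (fun st : coloring V * coloring V => st.1 w != st.2 w)
                (zip (f1 :: p) p) = absz (h w)
          /\ all (fun st : coloring V * coloring V =>
                 (st.1 w != st.2 w) ==>
                 (st.2 w - st.1 w == ((sgz (h w))%:~R : 'Z_3)%R)%R)
              (zip (f1 :: p) p)].

Lemma toggle_walk_refl (f : coloring V) (h : V -> int) :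
  (forall v, h v = 0%R) -> toggle_walk f f h.
Proof.
move=> h0; exists [::]; split => // [|w]; last by rewrite h0.
by apply/esym/eqP; rewrite norm1_eq0; apply/forallP => v; rewrite h0.
Qed.

Lemma toggle_walk_cons (f1 f2 : coloring V) (h : V -> int) w
    (f1' := toggle f1 w (sgz (h w))%:~R%R) :
  (h w != 0)%R -> proper_coloring e f1' -> toggle_walk f1' f2 (shrink h w) ->
  toggle_walk f1 f2 h.
Proof.
move=> hw_neq0 pf1' [p [p_proper p_path p_last p_size p_toggles]].
have c_neq0 := sgz_Z3_neq0 hw_neq0.
exists (f1' :: p); split => /=; rewrite ?pf1' ?p_path ?toggle_C3adj //.
  by rewrite p_size -norm1_shrink.
move=> x; have f1'_sub := toggle_sub f1 w (sgz (h w))%:~R%R x; rewrite -/f1' in f1'_sub.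
have step_x : (f1 x != f1' x) = (x == w).
  by rewrite eq_sym -subr_eq0 f1'_sub; case: (x == w); rewrite ?eqxx.
rewrite step_x f1'_sub; case: (eqVneq x w) => [->|xw] /=; last first.
  by have := p_toggles x; rewrite /shrink (negbTE xw).
have [w_count w_sign] := p_toggles w; rewrite /shrink eqxx in w_count w_sign.
rewrite w_count abszBsgz; split; first by rewrite add1n prednK // absz_gt0.
rewrite eqxx /=.
have [hw'0|hw'_neq0] := eqVneq (h w - sgz (h w))%R 0%R; last by rewrite -sgzBsgz.
(* once [h w] reaches 0, the rest of the walk never toggles [w] *)
rewrite hw'0 in w_sign; apply: sub_all w_sign => st /implyP toggled.
by apply/implyP => tog; move: (toggled tog); rewrite sgz0 subr_eq0 eq_sym (negbTE tog).
Qed.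

Lemma toggle_walk_exists (f1 f2 : coloring V) (h : V -> int) :
  is_tree e -> proper_coloring e f1 -> proper_coloring e f2 -> D e f1 f2 h ->
  toggle_walk f1 f2 h.
Proof.
move=> [[sym_e _] _ acyclic_e] + pf2; move: {2}(norm1 h) (erefl (norm1 h)) => n.
elim: n f1 h => [|n IHn] f1 h norm_h pf1 Dh.
  have h0 v : h v = 0%R by apply/eqP; move/eqP: norm_h; rewrite norm1_eq0 => /forallP.
  suff -> : f2 = f1 by apply: toggle_walk_refl.
  apply/ffunP => v; apply/eqP; rewrite -subr_eq0; by case: Dh => _ <-; rewrite h0.
have [v0 hv0_neq0] : exists v, (h v != 0)%R.
  by apply/existsP; rewrite -negb_forall -norm1_eq0 norm_h.
have [w [hw_neq0 hw_max w_free]] := exists_free_max_vertex acyclic_e pf2 Dh hv0_neq0.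
have pf1' := toggle_proper sym_e pf1 w_free.
have norm_h' : norm1 (shrink h w) = n.
  by move: norm_h; rewrite (norm1_shrink hw_neq0) => -[].
have Dh' := D_toggle_shrink sym_e Dh hw_neq0 hw_max.
exact: toggle_walk_cons hw_neq0 pf1' (IHn _ _ norm_h' pf1' Dh').
Qed.

End ToggleWalks.

Theorem mainTheorem5 (V : finType) (e : rel V) (f1 f2 : coloring V) (h : V -> int) :
  is_tree e -> proper_coloring e f1 -> proper_coloring e f2 -> D e f1 f2 h ->
  exists p : seq (coloring V),
    [/\ all (proper_coloring e) p,
        path (@C3adj V) f1 p,
        last f1 p = f2,
        size p = norm1 h
      & forall w : V,
          count (fun st : coloring V * coloring V => st.1 w != st.2 w)
                (zip (f1 :: p) p) = absz (h w)
          /\ all (fun st : coloring V * coloring V =>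
                 (st.1 w != st.2 w) ==>
                 (st.2 w - st.1 w == ((sgz (h w))%:~R : 'Z_3)%R)%R)
              (zip (f1 :: p) p)].
Proof. exact: toggle_walk_exists. Qed.
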